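(* Let $(J,S)$ be a homogeneous $d$-dimensional multi-time Markov renewal chain with semi-Markov kernel $q$ and sojourn times $(X_n)$. Let $\phi:\mathbb{N}^d\to\mathbb{N}$ be a function, $\Phi_n:=\phi(X_n)$ and $S^{[\phi]}_n:=\sum_{k=0}^n\Phi_k$, $n\ge0$. Then $(J,S^{[\phi]})$ is a Markov renewal chain with interjump times $(\Phi_n)_{n\ge1}$, i.e. for all $n$, $j\in E$, $k\in\mathbb{N}$, a.s. $\mathbb{P}(J_{n+1}=j,S^{[\phi]}_{n+1}-S^{[\phi]}_n=k\mid J_{0:n},S^{[\phi]}_{0:n})=q^{[\phi]}_{J_nj}(k)$, with semi-Markov kernel $$q^{[\phi]}_{ij}(k)=\sum_{v\in\mathbb{N}^d:\ \phi(v)=k}q_{ij}(v),\qquad i,j\in E,\ k\in\mathbb{N}.$$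
   Context: $E=\{1,\dots,s\}$. $\mathbb{N}^d$ carries the partial order $k\le l$ iff $k_u\le l_u$ for all $u$, and $k<l$ iff $k\le l$, $k\ne l$. A homogeneous $d$-dimensional multi-time Markov renewal chain is a process $(J_n,S_n)_{n\in\mathbb{N}}$, $J_n\in E$, $S_n\in\mathbb{N}^d$, $S_0=0_d$, $S_n<S_{n+1}$, such that a.s. $\mathbb{P}(J_{n+1}=j,S_{n+1}-S_n=k\mid J_{0:n},S_{0:n})=q_{J_nj}(k)$ where $q_{ij}(k)=\mathbb{P}(J_{n+1}=j,S_{n+1}-S_n=k\mid J_n=i)$ does not depend on $n$ (the semi-Markov kernel). Sojourn times: $X_0=0_d$, $X_n=S_n-S_{n-1}$ for $n\ge1$. *)

From HB Require Import structures.
From mathcomp Require Import all_boot all_order all_algebra.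
From mathcomp Require Import all_classical all_reals all_analysis.
Set Implicit Arguments. Unset Strict Implicit. Unset Printing Implicit Defensive.
Import Order.TTheory GRing.Theory Num.Theory.
Local Open Scope classical_set_scope.
Local Open Scope ring_scope.

Definition vec (d : nat) := {ffun 'I_d -> nat}.
Definition vzero (d : nat) : vec d := [ffun => 0%N].
Definition vle d (k l : vec d) : Prop := forall u, (k u <= l u)%N.
Definition vlt d (k l : vec d) : Prop := vle k l /\ k <> l.
(* componentwise difference (used only when k >= l, where it is exact) *)
Definition vsub d (k l : vec d) : vec d := [ffun u => (k u - l u)%N].

Section MRC.
Context {dT : measure_display} {T : measurableType dT} {R : realType}.
Context (s d : nat).

Definition sojourn (S : nat -> T -> vec d) (n : nat) (w : T) : vec d :=
  if n is n'.+1 then vsub (S n w) (S n' w) else vzero d.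

Definition history {V : Type} (J : nat -> T -> 'I_s) (S : nat -> T -> V)
  (n : nat) (i : nat -> 'I_s) (t : nat -> V) : set T :=
  [set w | forall m, (m <= n)%N -> J m w = i m /\ S m w = t m].

(* The a.s. conditional identity given the discrete variables J_{0:n},S_{0:n}
   is written atom-wise (multiplied out):
   P(J_{n+1}=j, S_{n+1}-S_n=k, H) = q_{i_n j}(k) P(H) for every history H. *)
Definition is_MTMRC (P : probability T R) (J : nat -> T -> 'I_s)
  (S : nat -> T -> vec d) (q : 'I_s -> 'I_s -> vec d -> R) : Prop :=
  (forall n i, measurable [set w | J n w = i]) /\
      (forall n v, measurable [set w | S n w = v]) /\
      (forall w, S 0%N w = vzero d) /\
      (forall n w, vlt (S n w) (S n.+1 w)) /\
      (forall i j k, 0 <= q i j k) /\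
      (forall n j (k : vec d) (i : nat -> 'I_s) (t : nat -> vec d),
        P ([set w | J n.+1 w = j /\ vsub (S n.+1 w) (S n w) = k]
             `&` history J S n i t)
        = ((q (i n) j k)%:E * P (history J S n i t))%E).

Definition Sphi (phi : vec d -> nat) (S : nat -> T -> vec d) (n : nat) (w : T)
  : nat := (\sum_(0 <= m < n.+1) phi (sojourn S m w))%N.

Definition qphi (q : 'I_s -> 'I_s -> vec d -> R) (phi : vec d -> nat)
  (i j : 'I_s) (k : nat) : \bar R :=
  \esum_(v in [set v : vec d | phi v = k]) (q i j v)%:E.

End MRC.

From HB Require Import structures.
From mathcomp Require Import all_boot all_order all_algebra.
From mathcomp Require Import all_classical all_reals all_analysis.
Import Order.TTheory GRing.Theory Num.Theory.
Local Open Scope classical_set_scope.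
Local Open Scope ring_scope.

(* The increment S^[phi]_{n+1} - S^[phi]_n is phi(X_{n+1}), and the history
   {J_{0:n} = i_{0:n}, S^[phi]_{0:n} = t_{0:n}} depends only on the trajectory
   (J, S)_{0:n}, so it is a countable disjoint union of histories of (J, S).
   Summing the kernel identity of (J, S) first over these histories, then over
   the v with phi v = k, yields the kernel q^[phi]. *)

Section countable_esum.
Context {R : realType} {C : countType}.
Local Open Scope ereal_scope.

Lemma esum_pickle (A : set C) (a : C -> \bar R) : (forall c, 0 <= a c) ->
  \esum_(c in A) a c = \sum_(m <oo | m \in pickle @` A)
     (if pickle_inv m is Some c then a c else 0).
Proof.
move=> a0; rewrite nneseries_esum; last by move=> m _; case: pickle_inv.
rewrite set_mem_set esum_image; last by move=> x y _ _ /(pcan_inj (@pickleK _)).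
by apply: eq_esum => c _; rewrite pickleK_inv.
Qed.

Lemma esumZl (A : set C) (a : C -> \bar R) (x : R) :
  (0 <= x)%R -> (forall c, 0 <= a c) ->
  \esum_(c in A) (x%:E * a c) = x%:E * \esum_(c in A) a c.
Proof.
move=> x0 a0; rewrite !esum_pickle //; last by move=> c; rewrite mule_ge0.
rewrite -nneseriesZl; last by move=> m _; case: pickle_inv.
by apply: eq_eseriesr => m _; case: pickle_inv => //; rewrite mule0.
Qed.

End countable_esum.

Section countable_measure.
Context {d : measure_display} {T : measurableType d} {R : realType}.
Context {C : countType}.

Lemma bigcup_measurable_countable (B : set C) (F : C -> set T) :
  (forall c, B c -> measurable (F c)) -> measurable (\bigcup_(c in B) F c).
Proof.
move=> mF; rewrite bigcup_mkcond; apply: countable_bigcupT_measurable.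
  exact: countableP.
by move=> c; case: ifPn => // /set_mem /mF.
Qed.

Lemma measure_bigcup_countable (mu : {measure set T -> \bar R})
    (B : set C) (F : C -> set T) :
  (forall c, measurable (F c)) -> trivIset B F ->
  mu (\bigcup_(c in B) F c) = \esum_(c in B) mu (F c).
Proof.
move=> mF tF.
pose Fp m := if pickle_inv m is Some c then F c else set0.
have -> : \bigcup_(c in B) F c = \bigcup_(m in pickle @` B) Fp m.
  apply/seteqP; split => w.
  - by case=> c Bc Fcw; exists (pickle c); [exists c|rewrite /Fp pickleK_inv].
  - by case=> _ [c Bc <-]; rewrite /Fp pickleK_inv => Fcw; exists c.
rewrite measure_bigcup.
- rewrite esum_pickle //; apply: eq_eseriesr => m _; rewrite /Fp.
  by case: pickle_inv => //; rewrite measure0.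
- by move=> m _; rewrite /Fp; case: pickle_inv.
- move=> m1 m2 [c1 Bc1 <-] [c2 Bc2 <-]; rewrite /Fp !pickleK_inv => F12.
  by congr pickle; exact: tF.
Qed.

Lemma measure_setI_bigcup_scale (mu : {measure set T -> \bar R})
    (B : set C) (F : C -> set T) (A : set T) (x : R) :
  (0 <= x)%R -> measurable A -> (forall c, measurable (F c)) -> trivIset B F ->
  (forall c, B c -> mu (A `&` F c) = (x%:E * mu (F c))%E) ->
  mu (A `&` \bigcup_(c in B) F c) = (x%:E * mu (\bigcup_(c in B) F c))%E.
Proof.
move=> x0 mA mF tF AF; rewrite setI_bigcupr !measure_bigcup_countable //.
- by rewrite -esumZl //; apply: eq_esum.
- by move=> c; apply: measurableI.
- exact: trivIset_setIl.
Qed.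

End countable_measure.

Definition saturated {T U : Type} (Z : T -> U) (X : set T) :=
  forall w w', Z w = Z w' -> X w -> X w'.

Lemma saturated_bigcup_fibers {T U : Type} {Z : T -> U} {X : set T} :
  saturated Z X -> X = \bigcup_(c in Z @` X) Z @^-1` [set c].
Proof.
move=> satX; apply/seteqP; split => w; first by move=> Xw; exists (Z w).
by case=> _ [w' Xw' <-] /= Zww'; exact: satX (esym Zww') Xw'.
Qed.

Lemma measurable_saturated {d : measure_display} {T : measurableType d}
    {C : countType} {Z : T -> C} {X : set T} :
  (forall c, measurable (Z @^-1` [set c])) -> saturated Z X -> measurable X.
Proof.
move=> mZ /saturated_bigcup_fibers ->.
by apply: bigcup_measurable_countable => c _.
Qed.

Section Sphi.
Context {dT : measure_display} {T : measurableType dT} {d : nat}.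
Variables (phi : vec d -> nat) (S : nat -> T -> vec d).

Lemma Sphi_subn n w :
  (Sphi phi S n.+1 w - Sphi phi S n w)%N = phi (vsub (S n.+1 w) (S n w)).
Proof. by rewrite /Sphi big_nat_recr //= addKn. Qed.

Lemma eq_Sphi n w w' :
  (forall m, (m <= n)%N -> S m w = S m w') -> Sphi phi S n w = Sphi phi S n w'.
Proof.
move=> e; apply: eq_big_nat => -[|l] /andP[_ ln] //=.
by rewrite /sojourn !e // ltnW.
Qed.

End Sphi.

Section trajectory.
Context {dT : measure_display} {T : measurableType dT} {R : realType}.
Context {s d : nat} (J : nat -> T -> 'I_s) (S : nat -> T -> vec d).

Definition trajectory (n : nat) (w : T) : {ffun 'I_n.+1 -> 'I_s * vec d} :=
  [ffun m : 'I_n.+1 => (J m w, S m w)].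

Lemma trajectory_eqP n w w' : trajectory n w = trajectory n w' <->
  (forall m, (m <= n)%N -> J m w = J m w' /\ S m w = S m w').
Proof.
split=> [e m mn|e].
  have /= := congr1 (fun c : {ffun 'I_n.+1 -> 'I_s * vec d} => c (inord m)) e.
  by rewrite !ffunE inordK //; case.
by apply/ffunP => m; rewrite !ffunE; have [-> ->] := e m (ltn_ord m).
Qed.

Lemma trajectory_fiber n c : trajectory n @^-1` [set c] =
  history J S n (fun m => (c (inord m)).1) (fun m => (c (inord m)).2).
Proof.
apply/seteqP; split => w /=.
- by move=> <- m mn; rewrite ffunE inordK.
- move=> hw; apply/ffunP => m; rewrite ffunE.
  by have [/= -> ->] := hw m (ltn_ord m); rewrite inord_val; case: (c m).
Qed.

Lemma saturated_Sphi_history (phi : vec d -> nat) n i t :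
  saturated (trajectory n) (history J (Sphi phi S) n i t).
Proof.
move=> w w' /trajectory_eqP e hw m mn; have [Jm Sm] := hw m mn.
split; first by rewrite -(e m mn).1.
by rewrite -Sm; apply: eq_Sphi => l lm; rewrite (e l _).2 // (leq_trans lm).
Qed.

Hypothesis measurable_J : forall n i, measurable [set w | J n w = i].
Hypothesis measurable_S : forall n v, measurable [set w | S n w = v].

Lemma measurable_history n i t : measurable (history J S n i t).
Proof.
have -> : history J S n i t = \bigcap_(m in [set m | (m <= n)%N])
    ([set w | J m w = i m] `&` [set w | S m w = t m]) by [].
by apply: bigcap_measurableType => m _; exact: measurableI.
Qed.

Lemma measurable_trajectory_fiber n c :
  measurable (trajectory n @^-1` [set c]).
Proof. by rewrite trajectory_fiber; exact: measurable_history. Qed.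

Definition jump_event n j v :=
  [set w | J n.+1 w = j /\ vsub (S n.+1 w) (S n w) = v].

Lemma saturated_jump_event n j v : saturated (trajectory n.+1) (jump_event n j v).
Proof.
move=> w w' /trajectory_eqP e [Jj Sv].
by rewrite /jump_event /= -(e n.+1 _).1 // -(e n.+1 _).2 // -(e n _).2.
Qed.

Lemma measurable_jump_event n j v : measurable (jump_event n j v).
Proof.
exact: measurable_saturated (measurable_trajectory_fiber n.+1)
  (saturated_jump_event n j v).
Qed.

Variables (P : probability T R) (q : 'I_s -> 'I_s -> vec d -> R).
Hypothesis q_ge0 : forall i j v, 0 <= q i j v.
Hypothesis kernel : forall n j v (i : nat -> 'I_s) (t : nat -> vec d),
  P (jump_event n j v `&` history J S n i t) =
  ((q (i n) j v)%:E * P (history J S n i t))%E.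

Lemma kernel_saturated n i0 j v (X : set T) :
  saturated (trajectory n) X -> X `<=` [set w | J n w = i0] ->
  P (jump_event n j v `&` X) = ((q i0 j v)%:E * P X)%E.
Proof.
move=> satX XJ; rewrite (saturated_bigcup_fibers satX).
apply: measure_setI_bigcup_scale => //.
- exact: measurable_jump_event.
- exact: measurable_trajectory_fiber.
- exact: trivIset_preimage1.
- move=> _ [w Xw <-]; rewrite trajectory_fiber.
  have -> : i0 = (trajectory n w (inord n)).1 by rewrite ffunE inordK // XJ.
  exact: kernel.
Qed.

End trajectory.

Theorem proposition6 (dT : measure_display) (T : measurableType dT)
  (R : realType) (P : probability T R) (s d : nat)
  (J : nat -> T -> 'I_s) (S : nat -> T -> vec d)
  (q : 'I_s -> 'I_s -> vec d -> R) (phi : vec d -> nat) :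
  is_MTMRC P J S q ->
  forall (n : nat) (j : 'I_s) (k : nat) (i : nat -> 'I_s) (t : nat -> nat),
    P ([set w | J n.+1 w = j /\ (Sphi phi S n.+1 w - Sphi phi S n w)%N = k]
         `&` history J (Sphi phi S) n i t)
    = (qphi q phi (i n) j k * P (history J (Sphi phi S) n i t))%E.
Proof.
move=> [mJ [mS [_ [_ [q_ge0 kernel]]]]] n j k i t.
set H := history J (Sphi phi S) n i t.
have satH : saturated (trajectory J S n) H by exact: saturated_Sphi_history.
have mH : measurable H.
  exact: measurable_saturated (measurable_trajectory_fiber _ _ mJ mS n) satH.
have HJ : H `<=` [set w | J n w = i n] by move=> w /(_ n (leqnn n)) [].
have -> : [set w | J n.+1 w = j /\ (Sphi phi S n.+1 w - Sphi phi S n w)%N = k]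
    `&` H = \bigcup_(v in [set v | phi v = k]) (jump_event J S n j v `&` H).
  apply/seteqP; split => w /=; rewrite Sphi_subn.
  - by case=> -[Jj <-] Hw; exists (vsub (S n.+1 w) (S n w)).
  - by case=> v /= <- [[Jj ->] Hw].
rewrite measure_bigcup_countable; first last.
- by apply: trivIset_setIr => v1 v2 _ _ [w [[_ <-] [_ <-]]].
- by move=> v; apply: measurableI => //; exact: measurable_jump_event.
have jumpH v : P (jump_event J S n j v `&` H) = ((q (i n) j v)%:E * P H)%E.
  exact: kernel_saturated.
have PH_fin : P H = (fine (P H))%:E by rewrite fineK // fin_num_measure.
rewrite (eq_esum (fun v _ => jumpH v)) PH_fin (eq_esum (fun v _ => muleC _ _)).
rewrite esumZl.
- by rewrite muleC.
- by rewrite fine_ge0 // measure_ge0.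
- by move=> v; rewrite lee_fin.
Qed.
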